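(* Assume the standing assumptions, fix a function $h$ satisfying (h1)–(h4), and let $\sigma$ be a stopping time (with respect to an admissible filtration) with $\mathbf E\sigma<\infty$. Then $$\lim_{x\to\infty}\frac{\mathbf P(A_{\sigma,1}(x))}{\overline F(x)}=\mathbf E\sigma.$$
   Context: Standing assumptions: $\{\xi_n\}_{n\ge1}$ are i.i.d. real random variables with common distribution function $F$ and finite mean $\mathbf E\xi_1=-m<0$. $F$ is long-tailed: $\overline F(x)=1-F(x)>0$ for all $x$, and $\overline F(x-c)/\overline F(x)\to1$ as $x\to\infty$ for every fixed $c>0$. Notation: $S_0=0$ and $S_n=\sum_{i=1}^n\xi_i$. Admissible filtration: a stopping time $\sigma$ is taken with respect to a filtration $\{\mathcal F_n\}_{n\ge0}$ such that $\xi_n$ is $\mathcal F_n$-measurable and $\xi_{n+1}$ is independent of $\mathcal F_n$. The function $h:\mathbb R_+\to\mathbb R_+$ satisfies: - (h1) $h(x)\le x/2$ for all $x$; - (h2) $h(x)\to\infty$; - (h3) $\overline F(x-h(x))/\overline F(x)\to1$ as $x\to\infty$; - (h4) there exists $x_0$ with $h(x+t)\le h(x)+t$ for all $x\ge x_0$, $t\ge0$. For $x\ge0$, let $\mu(x)=\min\{n:S_n>x\}$, with $\min\emptyset=\infty$. Define $$A_{\sigma,1}(x)=\{\mu(x)\le\sigma,\ S_{\mu(x)-1}\le h(x)\}.$$ *)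

From HB Require Import structures.
From mathcomp Require Import all_boot all_order all_algebra.
From mathcomp Require Import all_classical all_reals all_analysis.
Set Implicit Arguments. Unset Strict Implicit. Unset Printing Implicit Defensive.
Import Order.TTheory GRing.Theory Num.Theory.
Import numFieldNormedType.Exports.
Local Open Scope classical_set_scope.
Local Open Scope ring_scope.

Section Defs.
Context {d : measure_display} {T : measurableType d} {R : realType}.
Variable P : probability T R.

(* The random walk: xi n is xi_n for n >= 1 (xi 0 is ignored); S 0 = 0. *)
Definition S (xi : nat -> T -> R) (n : nat) (t : T) : R :=
  \sum_(i < n) xi i.+1 t.

Definition common_cdf (xi : nat -> T -> R) (F : R -> R) : Prop :=
  forall n x, (0 < n)%N -> P [set t | xi n t <= x] = (F x)%:E.

Definition mutually_independent (xi : nat -> T -> R) : Prop :=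
  forall (n : nat) (B : nat -> set R), (forall i, measurable (B i)) ->
    P (\bigcap_(i in `I_n) (xi i.+1 @^-1` B i)) =
    (\prod_(i < n) P (xi i.+1 @^-1` B i))%E.

Definition filtration (G : nat -> set (set T)) : Prop :=
  (forall n, sigma_algebra setT (G n)) /\
  (forall n, G n `<=` measurable) /\
  (forall n m, (n <= m)%N -> G n `<=` G m).

Definition admissible (xi : nat -> T -> R) (G : nat -> set (set T)) : Prop :=
  filtration G /\
  (forall n (B : set R), (0 < n)%N -> measurable B -> G n (xi n @^-1` B)) /\
  (forall n A (B : set R), G n A -> measurable B ->
     P (A `&` (xi n.+1 @^-1` B)) = (P A * P (xi n.+1 @^-1` B))%E).

(* Stopping time with values in N u {oo}; None encodes oo. *)
Definition stopping_time (G : nat -> set (set T)) (sigma : T -> option nat) : Prop :=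
  forall n, G n [set t | sigma t = Some n].

Definition ext_time (sigma : T -> option nat) (t : T) : \bar R :=
  match sigma t with Some n => (n%:R)%:E | None => +oo%E end.

Definition le_time (n : nat) (sigma : T -> option nat) (t : T) : Prop :=
  match sigma t with Some k => (n <= k)%N | None => True end.

(* A_{sigma,1}(x) = { mu(x) <= sigma, S_{mu(x)-1} <= h(x) } where
   mu(x) = min{n : S_n > x}; "mu(x) = n" is written out literally. *)
Definition A_sigma1 (xi : nat -> T -> R) (sigma : T -> option nat)
    (h : R -> R) (x : R) : set T :=
  [set t | exists n : nat,
      (S xi n t > x /\ forall k, (k < n)%N -> S xi k t <= x) /\
      le_time n sigma t /\ S xi n.-1 t <= h x].

End Defs.

(* Split A_{sigma,1}(x) according to the first passage time mu(x) = n + 1.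
   On that piece S_n <= h(x) < x < S_{n+1}, so the jump xi_{n+1} exceeds
   x - h(x), while {sigma >= n + 1} lies in G_n and is independent of
   xi_{n+1}; summing over n gives P(A) <= E sigma * Fbar(x - h(x)).
   Conversely, if the walk stays in [-c, c] up to time n < N, sigma >= n + 1
   and xi_{n+1} > x + c, then mu(x) = n + 1 and S_n <= c <= h(x); these
   events are disjoint, so P(A) >= sum_{n < N} P(sigma > n, walk in [-c, c])
   * Fbar(x + c), and the survival probabilities approach E sigma as N and
   c grow.  Long-tailedness and (h3) turn both bounds into E sigma * Fbar(x). *)
From HB Require Import structures.
From mathcomp Require Import all_boot all_order all_algebra.
From mathcomp Require Import all_classical all_reals all_analysis.
From mathcomp Require Import zify lra.
Import Order.TTheory GRing.Theory Num.Theory.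
Import numFieldNormedType.Exports.
Local Open Scope classical_set_scope.
Local Open Scope ring_scope.

Section real_measurable_sets.
Context {d} {U : measurableType d} {R : realType} {f : U -> R}.
Hypothesis mf : measurable_fun setT f.

Lemma measurable_le_set a : measurable [set t | f t <= a].
Proof.
have := mf measurableT _ (measurable_itv `]-oo, a]); rewrite setTI.
by congr measurable; apply/seteqP; split => t /=; rewrite in_itv.
Qed.

Lemma measurable_lt_set a : measurable [set t | f t < a].
Proof.
have := mf measurableT _ (measurable_itv `]-oo, a[); rewrite setTI.
by congr measurable; apply/seteqP; split => t /=; rewrite in_itv.
Qed.

Lemma measurable_gt_set a : measurable [set t | a < f t].
Proof.
have := mf measurableT _ (measurable_itv `]a, +oo[); rewrite setTI.
by congr measurable; apply/seteqP; split => t /=; rewrite in_itv /= andbT.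
Qed.

End real_measurable_sets.

Lemma cvg_shift_pinfty {R : realType} {g : R -> R} (a : R) {l : R} :
  g x @[x --> +oo] --> l -> g (x + a) @[x --> +oo] --> l.
Proof.
have shift_oo : (x + a) @[x --> +oo] --> +oo.
  apply/cvgryPge => A; near=> x; rewrite -lerBlDr; near: x.
  exact/nbhs_pinfty_ge/num_real.
exact: cvg_comp shift_oo.
Unshelve. all: by end_near.
Qed.

Lemma long_tailed_shift_cvg {R : realType} (g : R -> R) {c : R} :
  (forall c, 0 < c -> g (x - c) / g x @[x --> +oo] --> (1 : R)) -> 0 < c ->
  g (x + c) / g x @[x --> +oo] --> (1 : R).
Proof.
move=> tail c0.
have -> : (fun x => g (x + c) / g x) = (fun x => (g (x + c - c) / g (x + c))^-1).
  by apply/funext => x; rewrite addrK invf_div.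
rewrite -[X in _ --> X]invr1.
exact: cvgV (oner_neq0 R) (cvg_shift_pinfty c (tail c c0)).
Qed.

Lemma cvg_ratio_squeeze {R : realType} {f u : R -> R} {l : R} :
  u x @[x --> +oo] --> (1 : R) ->
  (\forall x \near +oo, f x <= l * u x) ->
  (forall e, 0 < e -> exists2 v : R -> R, v x @[x --> +oo] --> (1 : R) &
     \forall x \near +oo, (l - e) * v x <= f x) ->
  f x @[x --> +oo] --> l.
Proof.
move=> u1 up low; apply/cvgrPdist_lt => e e0.
have e2 : 0 < e / 2 by lra.
have [v v1 lowv] := low (e / 2) e2.
have lu : l * u x @[x --> +oo] --> l.
  by rewrite -[X in _ --> X]mulr1; exact: cvgM (cvg_cst l) u1.
have lv : (l - e / 2) * v x @[x --> +oo] --> l - e / 2.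
  by rewrite -[X in _ --> X]mulr1; exact: cvgM (cvg_cst _) v1.
have near_lu := (cvgrPdist_lt _ _).1 lu e e0.
have near_lv := (cvgrPdist_lt _ _).1 lv (e / 2) e2.
near=> x.
have hi : f x <= l * u x by near: x; exact: up.
have lo : (l - e / 2) * v x <= f x by near: x; exact: lowv.
have : `|l - l * u x| < e by near: x; exact: near_lu.
have : `|l - e / 2 - (l - e / 2) * v x| < e / 2 by near: x; exact: near_lv.
rewrite !ltr_norml => /andP[? ?] /andP[? ?].
by apply/andP; split; lra.
Unshelve. all: by end_near.
Qed.

Section random_walk.
Context {d : measure_display} {T : measurableType d} {R : realType}
  {P : probability T R} {xi : nat -> T -> R} {F : R -> R}
  {G : nat -> set (set T)} {sigma : T -> option nat}.
Hypotheses (cdf : common_cdf P xi F) (adm : admissible P xi G)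
  (st : stopping_time G sigma).

Let G_measurable {n} : G n `<=` measurable.
Proof. by case: adm => [[_ [H _]] _]; exact: H. Qed.
Let G_mono {n m} : (n <= m)%N -> G n `<=` G m.
Proof. by case: adm => [[_ [_ H]] _]; exact: H. Qed.
Let xi_adapted {n B} : (0 < n)%N -> measurable B -> G n (xi n @^-1` B).
Proof. by case: adm => _ [H _]; exact: H. Qed.
Let xi_indep {n A B} : G n A -> measurable B ->
  P (A `&` (xi n.+1 @^-1` B)) = (P A * P (xi n.+1 @^-1` B))%E.
Proof. by case: adm => _ [_ H]; exact: H. Qed.

(* G n as the measurable sets of a measurable type, to reuse measurability
   lemmas inside the sub-sigma-algebra. *)
Let Gspace n := g_sigma_algebraType (G n).
Let GspaceE n : G n = (measurable : set (set (Gspace n))).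
Proof. by rewrite measurable_g_measurableTypeE //; case: adm => [[]]. Qed.

Lemma measurable_S_G n k : (k <= n)%N -> measurable_fun [set: Gspace n] (S xi k).
Proof.
move=> kn; apply: measurable_sum => i _ B mB; rewrite setTI -GspaceE.
have i_n : (i.+1 <= n)%N := leq_trans (ltn_ord i) kn.
exact: G_mono i_n _ (xi_adapted (ltn0Sn i) mB).
Qed.

Lemma measurable_xi {k} : (0 < k)%N -> measurable_fun [set: T] (xi k).
Proof. by move=> k0 _ B mB; rewrite setTI; exact: G_measurable _ (xi_adapted k0 mB). Qed.

Lemma measurable_S k : measurable_fun [set: T] (S xi k).
Proof. by apply: measurable_sum => i; exact: measurable_xi. Qed.

Lemma S_0 t : S xi 0 t = 0. Proof. by rewrite /S big_ord0. Qed.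

Lemma S_S n t : S xi n.+1 t = S xi n t + xi n.+1 t.
Proof. by rewrite /S big_ord_recr. Qed.

Definition sigma_ge n := [set t | le_time n sigma t].

Lemma sigma_geS_G n : G n (sigma_ge n.+1).
Proof.
have -> : sigma_ge n.+1 =
    ~` \bigcup_(k in [set k | (k <= n)%N]) [set t | sigma t = Some k].
  apply/seteqP; split => t; rewrite /sigma_ge /le_time /=.
    by move=> + [k /= kn ekt]; rewrite ekt; lia.
  move=> nj; case E: (sigma t) => [j|] //; rewrite ltnNge; apply/negP => jn.
  by apply: nj; exists j.
rewrite GspaceE; apply/measurableC/bigcup_measurable => k /= kn.
by rewrite -GspaceE; exact: G_mono kn _ (st k).
Qed.

Lemma measurable_sigma_ge n : measurable (sigma_ge n).
Proof.
case: n => [|n]; last exact/G_measurable/sigma_geS_G.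
rewrite (_ : sigma_ge 0 = setT) //.
by apply/seteqP; split => t // _; rewrite /sigma_ge /le_time /=; case: (sigma t).
Qed.

Lemma fine_measureK A : measurable A -> (fine (P A))%:E = P A.
Proof. by move=> mA; rewrite fineK // fin_num_measure. Qed.

Lemma fine_le_measure A B : measurable A -> measurable B -> A `<=` B ->
  fine (P A) <= fine (P B).
Proof.
move=> mA mB AB; rewrite -lee_fin !fine_measureK //.
by apply: le_measure => //; rewrite inE.
Qed.

Lemma measurable_jump_gt n y : measurable (xi n.+1 @^-1` `]y, +oo[).
Proof.
have := measurable_xi (ltn0Sn n) measurableT _ (measurable_itv `]y, +oo[).
by rewrite setTI.
Qed.

Lemma tail_xi n y : P (xi n.+1 @^-1` `]y, +oo[) = (1 - F y)%:E.
Proof.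
have -> : xi n.+1 @^-1` `]y, +oo[ = ~` [set t | xi n.+1 t <= y].
  by apply/seteqP; split => t /=; rewrite in_itv /= andbT ltNge => /negP.
rewrite probability_setC ?cdf //.
exact/measurable_le_set/measurable_xi.
Qed.

Lemma tail_ge0 y : 0 <= 1 - F y.
Proof. by rewrite -lee_fin -(tail_xi 0). Qed.

Lemma indep_tail n A y : G n A ->
  P (A `&` xi n.+1 @^-1` `]y, +oo[) = (P A * (1 - F y)%:E)%E.
Proof. by move=> GA; rewrite xi_indep // tail_xi. Qed.

Lemma ext_time_series t :
  ext_time sigma t = (\sum_(n <oo) (\1_(sigma_ge n.+1) t)%:E : \bar R)%E.
Proof.
have ind1 n : le_time n.+1 sigma t -> \1_(sigma_ge n.+1) t = 1 :> R.
  by move=> ?; rewrite indicE mem_set.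
rewrite /ext_time; case E: (sigma t) => [k|].
  rewrite (nneseries_split 0 k); last by move=> j _; rewrite lee_fin.
  rewrite eseries0 ?adde0; last first.
    by move=> j /= kj _; rewrite indicE memNset //= /sigma_ge /le_time /= E; lia.
  rewrite add0n sumEFin (eq_big_nat _ _ (F2 := fun=> 1)) ?sumr_const_nat ?subn0 //.
  by move=> j /andP[_ jk]; apply: ind1; rewrite /le_time E.
have partial n : (\sum_(0 <= j < n) (\1_(sigma_ge j.+1) t)%:E = n%:R%:E :> \bar R)%E.
  rewrite sumEFin (eq_big_nat _ _ (F2 := fun=> 1)) ?sumr_const_nat ?subn0 //.
  by move=> j _; apply: ind1; rewrite /le_time E.
by apply/esym/cvg_lim => //; rewrite (funext partial); apply/cvgenyP.
Qed.

Lemma expectation_sigma_series :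
  (\int[P]_t ext_time sigma t = \sum_(n <oo) P (sigma_ge n.+1))%E.
Proof.
rewrite (funext ext_time_series) integral_nneseries //; last first.
  move=> n; apply/measurable_realfun.measurable_EFinP.
  exact/measurable_realfun.measurable_indic/measurable_sigma_ge.
apply: eq_eseriesr => n _; rewrite integral_indic ?setIT //.
exact: measurable_sigma_ge.
Qed.

Definition first_passage h x n := [set t |
  (S xi n t > x /\ forall k, (k < n)%N -> S xi k t <= x) /\
  le_time n sigma t /\ S xi n.-1 t <= h x].

Lemma A_sigma1E h x : A_sigma1 xi sigma h x = \bigcup_n first_passage h x n.
Proof. by apply/seteqP; split => t /= [n]; [exists n | move=> _; exists n]. Qed.

Lemma measurable_A_sigma1 h x : measurable (A_sigma1 xi sigma h x).
Proof.
rewrite A_sigma1E; apply: bigcupT_measurable => n.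
have -> : first_passage h x n = [set t | x < S xi n t] `&`
    (\bigcap_(k in `I_n) [set t | S xi k t <= x]) `&` sigma_ge n `&`
    [set t | S xi n.-1 t <= h x].
  apply/seteqP; split => t /=.
    by move=> [[? lex] [? ?]]; do !split => // k; exact: lex.
  by move=> [[[? lex] ?] ?]; do !split => // k; exact: lex.
apply/measurableI/measurable_le_set/measurable_S.
apply/measurableI/measurable_sigma_ge/measurableI.
  exact/measurable_gt_set/measurable_S.
by apply: bigcap_measurableType => k _; exact/measurable_le_set/measurable_S.
Qed.

Lemma A_sigma1_le_expectation h {x} : 0 <= x ->
  (P (A_sigma1 xi sigma h x) <=
    \int[P]_t ext_time sigma t * (1 - F (x - h x))%:E)%E.
Proof.
move=> x0; rewrite expectation_sigma_series.
pose B n := sigma_ge n.+1 `&` xi n.+1 @^-1` `]x - h x, +oo[.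
have mB n : measurable (B n).
  exact/measurableI/measurable_jump_gt/measurable_sigma_ge.
have AB : A_sigma1 xi sigma h x `<=` \bigcup_n B n.
  move=> t [[|n] [[Sx _] [alive Sh]]]; first by move: Sx; rewrite S_0 ltNge x0.
  exists n => //; split => //=; rewrite in_itv /= andbT.
  by move: Sx Sh; rewrite S_S /=; lra.
apply: le_trans (measure_sigma_subadditive _ mB (measurable_A_sigma1 h x) AB) _.
rewrite muleC -nneseriesZl //; apply: lee_nneseries => n _ //.
by rewrite muleC -(indep_tail _ _ (x - h x) (sigma_geS_G n)).
Qed.

Definition exit_by n c := \bigcup_(k in `I_n.+1)
  ([set t | c < S xi k t] `|` [set t | S xi k t < - c]).

Lemma exit_by_G n c : G n (exit_by n c).
Proof.
rewrite GspaceE; apply: bigcup_measurable => k /= kn.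
have mS : measurable_fun [set: Gspace n] (S xi k) by apply: measurable_S_G; lia.
by apply: measurableU; [exact: measurable_gt_set mS _ | exact: measurable_lt_set mS _].
Qed.

Lemma measurable_exit_by n c : measurable (exit_by n c).
Proof. exact/G_measurable/exit_by_G. Qed.

Lemma exit_byN_bound n c t k : ~ exit_by n c t -> (k <= n)%N ->
  - c <= S xi k t <= c.
Proof.
move=> out kn; rewrite !leNgt; apply/andP; split; apply/negP => ck; apply: out;
  by exists k; [rewrite /=; lia | rewrite /=; tauto].
Qed.

Lemma exit_by_monotone n m c : (n <= m)%N -> exit_by n c `<=` exit_by m c.
Proof. by move=> nm t [k /= kn ?]; exists k => //=; lia. Qed.

Lemma exit_by_antitone n c c' : c <= c' -> exit_by n c' `<=` exit_by n c.
Proof.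
by move=> cc' t [k kn [/= ck|/= ck]]; exists k => //; [left|right]; rewrite /=; lra.
Qed.

Lemma A_sigma1_ge_survival h N {c x : R} : c <= x -> c <= h x ->
  \sum_(n < N) fine (P (sigma_ge n.+1 `\` exit_by n c)) * (1 - F (x + c)) <=
  fine (P (A_sigma1 xi sigma h x)).
Proof.
move=> cx chx.
pose C n := (sigma_ge n.+1 `\` exit_by n c) `&` xi n.+1 @^-1` `]x + c, +oo[.
have GD n : G n (sigma_ge n.+1 `\` exit_by n c).
  by rewrite GspaceE; apply: measurableD; rewrite -GspaceE;
    [exact: sigma_geS_G | exact: exit_by_G].
have mC n : measurable (C n) by exact/measurableI/measurable_jump_gt/G_measurable.
have CA n : C n `<=` first_passage h x n.+1.
  move=> t [[alive /exit_byN_bound inside]] /=; rewrite in_itv /= andbT => jump.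
  have /andP[? ?] := inside _ (leqnn n).
  split; [split|split] => //; first by rewrite S_S; lra.
  by move=> k kn; have /andP[_ ?] := inside k (ltnSE kn); lra.
  by lra.
have tC : trivIset `I_N C.
  move=> i j _ _ [t [/CA [[Si lti] _] /CA [[Sj ltj] _]]].
  by case: (ltngtP i j) => // ij; [move: (ltj i.+1) | move: (lti j.+1)];
    rewrite ltnS => /(_ ij); rewrite leNgt ?Si ?Sj.
have -> : \sum_(n < N) fine (P (sigma_ge n.+1 `\` exit_by n c)) * (1 - F (x + c)) =
    fine (P (\big[setU/set0]_(n < N) C n)).
  rewrite measure_semi_additive_ord_I //; last exact: bigsetU_measurable.
  rewrite (eq_bigr (fun n : 'I_N =>
    (fine (P (sigma_ge n.+1 `\` exit_by n c)) * (1 - F (x + c)))%:E)) ?sumEFin //.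
  move=> n _; rewrite EFinM fine_measureK; last exact: G_measurable.
  by rewrite -(indep_tail _ _ (x + c) (GD n)).
apply: fine_le_measure; [exact: bigsetU_measurable | exact: measurable_A_sigma1 |].
move=> t Ct; have [n _ /CA ?] := bigsetU_bigcup Ct.
by rewrite A_sigma1E; exists n.+1.
Qed.

Lemma survival_without_exit n N c : (n <= N)%N ->
  fine (P (sigma_ge n.+1)) - fine (P (exit_by N c)) <=
  fine (P (sigma_ge n.+1 `\` exit_by n c)).
Proof.
move=> nN.
have mI : measurable (sigma_ge n.+1 `&` exit_by n c).
  exact/measurableI/measurable_exit_by/measurable_sigma_ge.
have mD : measurable (sigma_ge n.+1 `\` exit_by n c).
  exact/measurableD/measurable_exit_by/measurable_sigma_ge.
have -> : fine (P (sigma_ge n.+1)) = fine (P (sigma_ge n.+1 `\` exit_by n c)) +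
    fine (P (sigma_ge n.+1 `&` exit_by n c)).
  by rewrite (measureDI P (measurable_sigma_ge _) (measurable_exit_by n c)) fineD
    ?fin_num_measure.
suff : fine (P (sigma_ge n.+1 `&` exit_by n c)) <= fine (P (exit_by N c)) by lra.
apply: fine_le_measure => //; first exact: measurable_exit_by.
by move=> t [_ /(exit_by_monotone _ _ c nN)].
Qed.

Lemma walk_bounded N t :
  exists c : nat, forall k, (k <= N)%N -> `|S xi k t| <= c%:R.
Proof.
elim: N => [|N [c Sc]].
  by exists (Num.Def.archi_bound `|S xi 0 t|) => k; rewrite leqn0 => /eqP ->;
    exact/ltW/archi_boundP.
exists (maxn c (Num.Def.archi_bound `|S xi N.+1 t|)) => k; rewrite leq_eqVlt.
case/orP => [/eqP ->|kN].
  by apply: le_trans (ltW (archi_boundP _)) _ => //; rewrite ler_nat leq_maxr.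
by apply: le_trans (Sc _ kN) _; rewrite ler_nat leq_maxl.
Qed.

Lemma exit_prob_small N {e : R} : 0 < e ->
  exists c : nat, fine (P (exit_by N c.+1%:R)) < e.
Proof.
move=> e0; pose E c := exit_by N c.+1%:R.
have mE c : measurable (E c) by exact: measurable_exit_by.
have E_decr : nonincreasing_seq E.
  by move=> m n mn; apply/asboolP/exit_by_antitone; rewrite ler_nat.
have capE : \bigcap_n E n = set0.
  apply/seteqP; split => t //= Et; have [c Sc] := walk_bounded N t.
  have [k /= kN] := Et c I; have := Sc _ kN; rewrite ler_norml => /andP[? ?].
  have : (c%:R : R) < c.+1%:R by rewrite ltr_nat.
  by case => /=; lra.
have PE0 : (P (E 0%N) < +oo)%E by rewrite -ge0_fin_numE // fin_num_measure.
have := nonincreasing_cvg_mu PE0 mE (bigcapT_measurable mE) E_decr.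
rewrite capE measure0 => /fine_cvgP[_ /cvgrPdist_lt /(_ e e0) [c0 _ near0]].
exists c0; have := near0 c0 (leqnn _); rewrite /= sub0r normrN.
exact: le_lt_trans (ler_norm _).
Qed.

Lemma expectation_sigma_approx {E e : R} :
  (\int[P]_t ext_time sigma t)%E = E%:E -> 0 < e ->
  exists N, E - e < \sum_(n < N) fine (P (sigma_ge n.+1)).
Proof.
move=> Esigma e0.
have series_sup : (\sum_(n <oo) P (sigma_ge n.+1) =
    ereal_sup (range (fun n => \sum_(0 <= i < n) P (sigma_ge i.+1))))%E.
  apply/cvg_lim => //; apply: ereal_nondecreasing_cvgn.
  by apply: ereal_nondecreasing_series => n _ _; exact: measure_ge0.
have : ((E - e)%:E <
    ereal_sup (range (fun n => \sum_(0 <= i < n) P (sigma_ge i.+1))))%E.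
  by rewrite -series_sup -expectation_sigma_series Esigma lte_fin; lra.
move=> /ereal_sup_gt[_ [N _ <-]] sum_N; exists N.
rewrite -lte_fin; apply: (lt_le_trans sum_N).
rewrite big_mkord -sumEFin le_eqVlt; apply/orP; left; apply/eqP.
by apply: eq_bigr => i _; rewrite fine_measureK //; exact: measurable_sigma_ge.
Qed.

Lemma A_sigma1_ge_eventually h {E e : R} :
  (\int[P]_t ext_time sigma t)%E = E%:E -> 0 < e ->
  exists2 c : R, 0 < c & forall x, c <= x -> c <= h x ->
    (E - e) * (1 - F (x + c)) <= fine (P (A_sigma1 xi sigma h x)).
Proof.
move=> Esigma e0; have e2 : 0 < e / 2 by lra.
have [N sum_N] := expectation_sigma_approx Esigma e2.
have N1 : 0 < N%:R + 1 :> R by rewrite ltr_wpDl.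
have [c exit_small] := exit_prob_small N (divr_gt0 e2 N1).
set w := fine (P (exit_by N c.+1%:R)) in exit_small.
have Nw : N%:R * w < e / 2.
  have w0 : 0 <= w by apply: fine_ge0; exact: measure_ge0.
  move: exit_small; rewrite ltr_pdivlMr //; apply: le_lt_trans.
  by rewrite mulrDr mulr1 mulrC lerDl.
exists c.+1%:R => [|x cx chx]; first by rewrite ltr0n.
apply: le_trans _ (A_sigma1_ge_survival h N cx chx).
rewrite -mulr_suml; apply: ler_wpM2r; first exact: tail_ge0.
have : \sum_(n < N) fine (P (sigma_ge n.+1)) - N%:R * w <=
    \sum_(n < N) fine (P (sigma_ge n.+1 `\` exit_by n c.+1%:R)).
  have -> : \sum_(n < N) fine (P (sigma_ge n.+1)) - N%:R * w =
      \sum_(n < N) (fine (P (sigma_ge n.+1)) - w).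
    by rewrite sumrB sumr_const card_ord mulr_natl.
  by apply: ler_sum => -[n /= nN] _; apply: survival_without_exit; exact: ltnW.
lra.
Qed.

End random_walk.

Theorem lemma1 (d : measure_display) (T : measurableType d) (R : realType)
  (P : probability T R) (xi : nat -> T -> R) (F : R -> R)
  (G : nat -> set (set T)) (sigma : T -> option nat) (h : R -> R) :
  (* i.i.d. with common distribution function F *)
  mutually_independent P xi ->
  common_cdf P xi F ->
  (* finite negative mean *)
  P.-integrable setT (EFin \o xi 1%N) ->
  (\int[P]_t (xi 1%N t)%:E < 0)%E ->
  (* F long-tailed *)
  (forall x, 0 < 1 - F x) ->
  (forall c, 0 < c ->
     (fun x => (1 - F (x - c)) / (1 - F x)) x @[x --> +oo] --> (1:R)) ->
  (* h : R_+ -> R_+ with (h1)-(h4) *)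
  (forall x, 0 <= x -> 0 <= h x) ->
  (forall x, 0 <= x -> h x <= x / 2) ->
  h x @[x --> +oo] --> +oo ->
  (fun x => (1 - F (x - h x)) / (1 - F x)) x @[x --> +oo] --> (1:R) ->
  (exists x0, 0 <= x0 /\ forall x t, x0 <= x -> 0 <= t -> h (x + t) <= h x + t) ->
  (* sigma a stopping time w.r.t. an admissible filtration, E sigma < oo *)
  admissible P xi G ->
  stopping_time G sigma ->
  (\int[P]_t ext_time sigma t < +oo)%E ->
  (fun x => fine (P (A_sigma1 xi sigma h x)) / (1 - F x)) x @[x --> +oo]
    --> fine (\int[P]_t ext_time sigma t).
Proof.
move=> _ cdf _ _ Fbar_gt0 long_tailed _ _ h_oo h3 _ adm st Esigma_fin.
have Esigma_ge0 : (0 <= \int[P]_t ext_time sigma t)%E.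
  by apply: integral_ge0 => t _; rewrite /ext_time; case: (sigma t).
have EsigmaE :
    (\int[P]_t ext_time sigma t = (fine (\int[P]_t ext_time sigma t))%:E)%E.
  by rewrite fineK // ge0_fin_numE.
apply: (cvg_ratio_squeeze h3).
  near=> x; have x0 : 0 <= x by near: x; exact: nbhs_pinfty_ge.
  have := A_sigma1_le_expectation cdf adm st h x0.
  rewrite EsigmaE -EFinM -(fine_measureK _ (measurable_A_sigma1 adm st h x)) lee_fin.
  by rewrite mulrA; apply: ler_wpM2r; rewrite ?invr_ge0 ?ltW.
move=> e e0; have [c c0 lower] := A_sigma1_ge_eventually cdf adm st h EsigmaE e0.
exists (fun x => (1 - F (x + c)) / (1 - F x)).
  by have := long_tailed_shift_cvg (fun x => 1 - F x) long_tailed c0; apply.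
near=> x; rewrite mulrA; apply: ler_wpM2r; first by rewrite invr_ge0 ltW.
apply: lower; near: x; first exact/nbhs_pinfty_ge/num_real.
by move/cvgryPge : h_oo; apply.
Unshelve. all: by end_near.
Qed.
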